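(* In the timely decision problem described in the context, fix $\eta$ and a state $(\mu_t,\nu_t)$ with $\nu_t=1$ and $\mu_t\notin\mathcal{T}(\eta)$. Take the uncertainty function $U=V^*(\cdot,\cdot;\eta)$ in the definition of the surprise $I_t$. Then there is a function $h$, increasing in each of its two arguments, such that the optimal acquisition is $$\lambda_t^*=\arg\sup_{\lambda\in\Lambda}\Big(h\big(I_t(\lambda),S_t(\lambda)\big)-\eta_{c,\lambda}c_\lambda\Big),$$ i.e. the optimal acquisition trades off surprise and suspense in addition to the immediate cost of acquisition.
   Context: $\Theta,\Lambda,\Omega$ finite nonempty; $\Delta(\Theta)$ the simplex. For $\theta\in\Theta,\lambda\in\Lambda$: known distributions $q_{\theta,\lambda}$ on $\Omega$ and $p_{\theta,\lambda}\in(0,1)$. Latent $\theta\sim\mu_0$. Survival $\nu_t$, $\nu_0=1$. At time $t$ with $\nu_t=1$ the agent either commits to a decision $\hat\theta\in\Theta$ or performs $\lambda_t\in\Lambda$; given $\theta$, $\nu_{t+1}=0$ w.p. $p_{\theta,\lambda_t}$, else $\nu_{t+1}=1$ and $\omega_{t+1}\sim q_{\theta,\lambda_t}$ is observed. Deadline $\delta=\min\{t:\nu_t=0\}$, $\tau=\min\{\delta,\sigma\}$ with $\sigma$ the decision time. Posterior updates: $M(\lambda,\mu,\omega)(\theta)\propto(1-p_{\theta,\lambda})q_{\theta,\lambda}(\omega)\mu(\theta)$, $\bar M(\lambda,\mu)(\theta)\propto p_{\theta,\lambda}\mu(\theta)$. Costs $c_\lambda>0$; weights $\eta=(\eta_a,\eta_b,\eta_c)$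 with positive entries. Loss $\ell=\sum_{\theta'}\eta_{a,\theta'}\mathbf 1\{\theta=\theta',\theta\neq\hat\theta,\tau<\delta\}+\sum_{\theta'}\eta_{b,\theta'}\mathbf 1\{\theta=\theta',\tau=\delta\}+\sum_{t<\tau}\eta_{c,\lambda_t}c_{\lambda_t}$. $V^*(\mu,\nu;\eta)$ is the optimal expected to-go loss. $\bar Q_{\hat\theta}(\mu,\nu;\eta)=(1-\nu)\sum_{\theta'}\eta_{b,\theta'}\mu(\theta')+\nu\sum_{\theta'\ne\hat\theta}\eta_{a,\theta'}\mu(\theta')$, $\bar Q=\min_{\hat\theta}\bar Q_{\hat\theta}$; $Q^*_\lambda(\mu,\nu;\eta)=(1-\nu)V^*(\mu,0;\eta)+\eta_{c,\lambda}c_\lambda+\nu\big(V^*(\bar M(\lambda,\mu),0;\eta)\sum_{\theta'}p_{\theta',\lambda}\mu(\theta')+\sum_\omega V^*(M(\lambda,\mu,\omega),1;\eta)\sum_{\theta'}(1-p_{\theta',\lambda})q_{\theta',\lambda}(\omega)\mu(\theta')\big)$, $Q^*=\min_\lambda Q^*_\lambda$; the optimal acquisition is $\lambda_t^*=\arg\inf_\lambda Q^*_\lambda(\mu_t,\nu_t;\eta)$. Termination set $\mathcal T(\eta)=\{\mu:Q^*(\mu,\nu_t;\eta)\ge\bar Q(\mu,\nu_t;\eta)\}$. For $U:\Delta(\Theta)\times\{0,1\}\to\mathbb{R}_+$, $(\mathbb{M}_\lambda U)(\mu,\nu)=(1-\nu)U(\mu,\nu)+\nu\,\mathbb{E}[U(M(\lambda,\mu,\omega),1)]$,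 where $\omega$ has the conditional law given survival, $\mathbb{P}(\omega)=\sum_{\theta'}(1-p_{\theta',\lambda})q_{\theta',\lambda}(\omega)\mu(\theta')/(1-\sum_{\theta'}p_{\theta',\lambda}\mu(\theta'))$. Surprise: $I_t(\lambda)=U(\mu_t,\nu_t)-\big(1-\sum_{\theta'}p_{\theta',\lambda}\mu_t(\theta')\big)(\mathbb{M}_\lambda U)(\mu_t,\nu_t)$. Suspense: $S_t(\lambda)=1-\frac{\sum_{\theta'}\eta_{b,\theta'}p_{\theta',\lambda}\mu_t(\theta')}{\sum_{\theta'}\eta_{b,\theta'}\mu_t(\theta')}$. *)

From HB Require Import structures.
From mathcomp Require Import all_boot all_order all_algebra.
From mathcomp Require Import boolp classical_sets reals.
Set Implicit Arguments. Unset Strict Implicit. Unset Printing Implicit Defensive.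
Import Order.TTheory GRing.Theory Num.Theory.
Local Open Scope ring_scope.
Local Open Scope classical_set_scope.

Section TimelyDecision.
Variables (R : realType) (Theta Lambda Omega : finType).

Record model := Model {
  qm : Theta -> Lambda -> Omega -> R;
  pm : Theta -> Lambda -> R;
  cm : Lambda -> R }.

Record weights := Weights {
  eta_a : Theta -> R;
  eta_b : Theta -> R;
  eta_c : Lambda -> R }.

(* Beliefs are (functions representing) points of the simplex Delta(Theta). *)
Definition belief := Theta -> R.

Definition is_dist (T : finType) (f : T -> R) :=
  (forall x, 0 <= f x) /\ \sum_x f x = 1.

Definition valid_model (m : model) :=
  [/\ forall th l, 0 < pm m th l < 1,
      forall th l, is_dist (qm m th l)
    & forall l, 0 < cm m l].

Definition valid_weights (e : weights) :=
  [/\ forall th, 0 < eta_a e th, forall th, 0 < eta_b e th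
    & forall l, 0 < eta_c e l].

Variables (m : model) (e : weights).

Definition Mpost (l : Lambda) (mu : belief) (w : Omega) : belief :=
  fun th => (1 - pm m th l) * qm m th l w * mu th /
            \sum_th' (1 - pm m th' l) * qm m th' l w * mu th'.

Definition Mbar (l : Lambda) (mu : belief) : belief :=
  fun th => pm m th l * mu th / \sum_th' pm m th' l * mu th'.

(* Deterministic policies: given the history of observations (most recent
   first), either commit to a decision (inl) or acquire lambda (inr). *)
Definition policy := seq Omega -> (Theta + Lambda)%type.

(* Expected loss accrued during the first n steps, for the (unnormalized)
   measure w on Theta (w th = mu(th) * P(current history, alive | th)). *)
Fixpoint Jn (n : nat) (pi : policy) (w : Theta -> R) : R :=
  match n with
  | 0 => 0
  | n'.+1 =>
    match pi [::] with
    | inl th' => \sum_(th | th != th') eta_a e th * w th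
    | inr l => eta_c e l * cm m l * \sum_th w th
               + \sum_th eta_b e th * pm m th l * w th
               + \sum_w' Jn n' (fun h => pi (w' :: h))
                   (fun th => w th * (1 - pm m th l) * qm m th l w')
    end
  end.

(* Expected total loss of a policy (monotone limit of Jn). *)
Definition exp_loss (pi : policy) (mu : belief) : R :=
  sup (range (fun n => Jn n pi mu)).

(* Optimal expected to-go loss V*(mu, nu; eta).  For nu = 0 the deadline
   has been hit and the to-go loss is sum eta_b mu. *)
Definition Vstar (mu : belief) (nu : bool) : R :=
  if nu then inf (range (fun pi : policy => exp_loss pi mu))
  else \sum_th eta_b e th * mu th.

Definition Qbar_th (thh : Theta) (mu : belief) (nu : bool) : R :=
  (1 - nu%:R) * \sum_th eta_b e th * mu th
  + nu%:R * \sum_(th | th != thh) eta_a e th * mu th.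

Definition Qbar (mu : belief) (nu : bool) : R :=
  inf (range (fun thh => Qbar_th thh mu nu)).

Definition Qlam (l : Lambda) (mu : belief) (nu : bool) : R :=
  (1 - nu%:R) * Vstar mu false + eta_c e l * cm m l
  + nu%:R * (Vstar (Mbar l mu) false * \sum_th pm m th l * mu th
             + \sum_w Vstar (Mpost l mu w) true
                 * \sum_th (1 - pm m th l) * qm m th l w * mu th).

Definition Qstar (mu : belief) (nu : bool) : R :=
  inf (range (fun l => Qlam l mu nu)).

Definition in_T (mu : belief) (nu : bool) : Prop := Qbar mu nu <= Qstar mu nu.

Definition Pobs (l : Lambda) (mu : belief) (w : Omega) : R :=
  \sum_th (1 - pm m th l) * qm m th l w * mu th /
  (1 - \sum_th pm m th l * mu th).

Definition MU (U : belief -> bool -> R) (l : Lambda) (mu : belief) (nu : bool) : R :=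
  (1 - nu%:R) * U mu nu + nu%:R * \sum_w U (Mpost l mu w) true * Pobs l mu w.

Definition surprise (U : belief -> bool -> R) (l : Lambda) (mu : belief) (nu : bool) : R :=
  U mu nu - (1 - \sum_th pm m th l * mu th) * MU U l mu nu.

Definition suspense (l : Lambda) (mu : belief) : R :=
  1 - (\sum_th eta_b e th * pm m th l * mu th) / (\sum_th eta_b e th * mu th).

End TimelyDecision.

From HB Require Import structures.
From mathcomp Require Import all_boot all_order all_algebra.
From mathcomp Require Import boolp classical_sets reals.
From mathcomp Require Import ring.
Set Implicit Arguments. Unset Strict Implicit. Unset Printing Implicit Defensive.
Import Order.TTheory GRing.Theory Num.Theory.
Local Open Scope ring_scope.

(* Write P_l for the deadline probability of acquisition l and B = V^*(mu, 0)
   for the loss at the deadline.  The survival branch of Q^*_l equals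
   (1 - P_l) M_l V^* at (mu, 1), that is V^*(mu, 1) - I_t(l), and its
   deadline branch equals sum_th eta_b p_l mu = B (1 - S_t(l)).  Hence
     Q^*_l(mu, 1) = V^*(mu, 1) + B - (I_t(l) + B S_t(l) - eta_c c_l),
   so minimizing Q^*_l means maximizing h(I_t, S_t) - eta_c c_l for
   h(i, s) = i + B s, which increases in both arguments because B > 0.
   The identity holds at every belief. *)

Section WeightedSums.
Variables (R : realType) (T : finType) (mu : T -> R).
Hypothesis mu_dist : is_dist mu.

Lemma is_dist_exists_gt0 : exists x, 0 < mu x.
Proof.
case: mu_dist => mu_ge0 mu_sum1.
apply: contrapT => no_pos; move: mu_sum1.
rewrite big1 => [/esym/eqP|x _]; first by rewrite oner_eq0.
apply/eqP; rewrite eq_le mu_ge0 andbT leNgt.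
by apply/negP => mux_gt0; apply: no_pos; exists x.
Qed.

Lemma wsum_gt0 (f : T -> R) : (forall x, 0 < f x) -> 0 < \sum_x f x * mu x.
Proof.
move=> f_gt0; have [x0 mux0_gt0] := is_dist_exists_gt0.
rewrite (bigD1 x0) //=; apply: ltr_pwDl; first exact: mulr_gt0.
by apply: sumr_ge0 => x _; apply: mulr_ge0; [exact: ltW | case: mu_dist].
Qed.

Lemma wsum_complement (f : T -> R) :
  1 - \sum_x f x * mu x = \sum_x (1 - f x) * mu x.
Proof.
case: mu_dist => _ mu_sum1; rewrite -{1}mu_sum1 -sumrB.
by apply: eq_bigr => x _; rewrite mulrBl mul1r.
Qed.

End WeightedSums.

Section SurpriseSuspense.
Variables (R : realType) (Theta Lambda Omega : finType).
Variables (m : model R Theta Lambda Omega) (e : weights R Theta Lambda).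
Variable mu : Theta -> R.
Hypothesis pm_range : forall th l, 0 < pm m th l < 1.
Hypothesis eta_b_gt0 : forall th, 0 < eta_b e th.
Hypothesis mu_dist : is_dist mu.

Local Notation deadline_prob l := (\sum_th pm m th l * mu th).

Lemma deadline_prob_gt0 l : 0 < deadline_prob l.
Proof. by apply: wsum_gt0 => // th; case/andP: (pm_range th l). Qed.

Lemma survival_prob_gt0 l : 0 < 1 - deadline_prob l.
Proof.
rewrite wsum_complement //; apply: wsum_gt0 => // th.
by rewrite subr_gt0; case/andP: (pm_range th l).
Qed.

Lemma Vstar_deadline_gt0 : 0 < Vstar m e mu false.
Proof. exact: wsum_gt0. Qed.

Lemma Vstar_Mbar_mul_deadline_prob l :
  Vstar m e (Mbar m l mu) false * deadline_prob l
  = \sum_th eta_b e th * pm m th l * mu th.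
Proof.
have := deadline_prob_gt0 l; rewrite /Vstar /Mbar mulr_suml => Pl_gt0.
by apply: eq_bigr => th _; field; rewrite gt_eqF.
Qed.

Lemma survival_prob_mul_MU (U : belief R Theta -> bool -> R) l :
  (1 - deadline_prob l) * MU m U l mu true
  = \sum_w U (Mpost m l mu w) true
      * \sum_th (1 - pm m th l) * qm m th l w * mu th.
Proof.
have := survival_prob_gt0 l => surv_gt0.
rewrite /MU /Pobs subrr mul0r add0r mul1r mulr_sumr.
by apply: eq_bigr => w _; rewrite -mulr_suml; field; rewrite gt_eqF.
Qed.

Lemma Vstar_deadline_mul_suspense l :
  Vstar m e mu false * suspense m e l mu
  = Vstar m e mu false - \sum_th eta_b e th * pm m th l * mu th.
Proof.
have := Vstar_deadline_gt0; rewrite /suspense /Vstar => B_gt0.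
by field; rewrite gt_eqF.
Qed.

Lemma Qlam_surprise_suspense l :
  Qlam m e l mu true
  = Vstar m e mu true + Vstar m e mu false
    - (surprise m (Vstar m e) l mu true + Vstar m e mu false * suspense m e l mu
       - eta_c e l * cm m l).
Proof.
rewrite /Qlam /surprise survival_prob_mul_MU Vstar_deadline_mul_suspense.
rewrite -Vstar_Mbar_mul_deadline_prob /= subrr mul0r add0r mul1r.
ring.
Qed.

End SurpriseSuspense.

Theorem proposition5 (R : realType) (Theta Lambda Omega : finType)
  (m : model R Theta Lambda Omega) (e : weights R Theta Lambda)
  (mu : Theta -> R) :
  (0 < #|Lambda|)%N ->
  valid_model m -> valid_weights e -> is_dist mu ->
  ~ in_T m e mu true ->
  exists h : R -> R -> R,
    [/\ forall s, {homo h^~ s : x y / x < y},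
        forall i, {homo h i : x y / x < y}
      & forall l : Lambda,
          (forall l', Qlam m e l mu true <= Qlam m e l' mu true) <->
          (forall l',
             h (surprise m (Vstar m e) l' mu true) (suspense m e l' mu)
               - eta_c e l' * cm m l'
             <= h (surprise m (Vstar m e) l mu true) (suspense m e l mu)
               - eta_c e l * cm m l)].
Proof.
move=> _ [pm_range _ _] [_ eta_b_gt0 _] mu_dist _.
have B_gt0 : 0 < Vstar m e mu false by exact: Vstar_deadline_gt0.
exists (fun i s => i + Vstar m e mu false * s); split.
- by move=> s x y; rewrite ltrD2r.
- by move=> i x y; rewrite ltrD2l ltr_pM2l.
- have Qlam_eq := Qlam_surprise_suspense pm_range eta_b_gt0 mu_dist.
  by move=> l; split=> opt l'; have := opt l'; rewrite !Qlam_eq lerD2l lerN2.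
Qed.
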